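(* Let $\mathcal M$ be a complete, connected Riemannian manifold, let $A=(a_{ij})\in\mathbb R^{N\times K}$ have unit row sums, let $f\in\mathcal M^N$, $p\in[1,\infty)$, $\lambda>0$, and let $R:\mathcal M^K\to[0,\infty)$ be a regularizing term. Assume that $R$ is lower semicontinuous and that for every sequence $(u^{(n)})_n$ in $\mathcal M^K$ with $\operatorname{diam}(u^{(n)})\to\infty$ one has $R(u^{(n)})\to\infty$. Then the variational problem $$\min_{u\in\mathcal M^K}\ \mathrm{dist}(\mathcal A(u),f)^p+\lambda R(u)$$ has a minimizer.
   Context: $\mathrm{dist}$ denotes the Riemannian distance on $\mathcal M$. The entries $a_{ij}$ of $A$ may be negative; only $\sum_j a_{ij}=1$ for each $i$ is assumed. For $u=(u_1,\dots,u_K)\in\mathcal M^K$ and $i\in\{1,\dots,N\}$, let $\mathrm{mean}(a_{i,\cdot},u)=\operatorname{argmin}_{v\in\mathcal M}\sum_{j=1}^K a_{ij}\,\mathrm{dist}(v,u_j)^2$ (the set of all minimizers), and let $\mathcal A(u)_i$ be the set of those elements of $\mathrm{mean}(a_{i,\cdot},u)$ that minimize $v\mapsto \mathrm{dist}(v,f_i)$ over $\mathrm{mean}(a_{i,\cdot},u)$ (the weighted Riemannian means closest to $f_i$). All elements of $\mathcal A(u)_i$ have the same distance to $f_i$, denoted $\mathrm{dist}(\mathcal A(u)_i,f_i)$, and the data term is $\mathrm{dist}(\mathcal A(u),f)^p=\sum_{i=1}^N \mathrm{dist}(\mathcal A(u)_i,f_i)^p$. For $u\in\mathcal M^K$, $\operatorname{diam}(u)=\max_{j,k}\mathrm{dist}(u_j,u_k)$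 is the diameter of the set of entries of $u$. *)

From Stdlib Require Import Reals Lra.
Open Scope R_scope.

Fixpoint sumR (n : nat) (g : nat -> R) : R :=
  match n with O => 0 | S m => sumR m g + g m end.

Fixpoint maxR (n : nat) (g : nat -> R) : R :=
  match n with O => 0 | S m => Rmax (maxR m g) (g m) end.

(* x^p for x >= 0, p >= 1, with the convention 0^p = 0. *)
Definition rpow (x p : R) : R :=
  match Req_EM_T x 0 with left _ => 0 | right _ => Rpower x p end.

(* Metric-space abstraction of the Riemannian distance of a complete,
   connected Riemannian manifold:
   - dist is a (finite-valued) metric  (connectedness => finite distance);
   - Hopf-Rinow: closed bounded sets are compact, stated sequentially;
   - Hopf-Rinow: any two points are joined by a minimizing geodesic,
     in particular midpoints exist. *)
Definition complete_connected_riemannian_distance {M : Type} (dist : M -> M -> R) : Prop :=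
  (forall x y, 0 <= dist x y) /\
  (forall x y, dist x y = 0 <-> x = y) /\
  (forall x y, dist x y = dist y x) /\
  (forall x y z, dist x z <= dist x y + dist y z) /\
  (forall (x : nat -> M) (o : M) (c : R), (forall n, dist (x n) o <= c) ->
     exists (phi : nat -> nat) (y : M),
       (forall n, (phi n < phi (S n))%nat) /\
       Un_cv (fun n => dist (x (phi n)) y) 0) /\
  (forall x y, exists z, dist x z = dist x y / 2 /\ dist z y = dist x y / 2).

(* Points of M^K are represented as u : nat -> M; only u 0, ..., u (K-1) matter. *)

Definition diam {M : Type} (dist : M -> M -> R) (K : nat) (u : nat -> M) : R :=
  maxR K (fun j => maxR K (fun k => dist (u j) (u k))).

Definition is_mean {M : Type} (dist : M -> M -> R) (K : nat)
    (A : nat -> nat -> R) (i : nat) (u : nat -> M) (v : M) : Prop :=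
  forall w : M,
    sumR K (fun j => A i j * (dist v (u j)) ^ 2) <=
    sumR K (fun j => A i j * (dist w (u j)) ^ 2).

Definition in_calA {M : Type} (dist : M -> M -> R) (K : nat)
    (A : nat -> nat -> R) (f : nat -> M) (u : nat -> M) (i : nat) (v : M) : Prop :=
  is_mean dist K A i u v /\
  forall w, is_mean dist K A i u w -> dist v (f i) <= dist w (f i).

(* objective_value u E : E = dist(A(u),f)^p + lambda R(u)
   (the value is independent of the chosen v_i \in A(u)_i). *)
Definition objective_value {M : Type} (dist : M -> M -> R) (N K : nat)
    (A : nat -> nat -> R) (f : nat -> M) (p lam : R) (Reg : (nat -> M) -> R)
    (u : nat -> M) (E : R) : Prop :=
  exists v : nat -> M,
    (forall i, (i < N)%nat -> in_calA dist K A f u i (v i)) /\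
    E = sumR N (fun i => rpow (dist (v i) (f i)) p) + lam * Reg u.

Definition lsc_on_MK {M : Type} (dist : M -> M -> R) (K : nat)
    (Reg : (nat -> M) -> R) : Prop :=
  forall (u : nat -> M) (eps : R), 0 < eps ->
    exists delta, 0 < delta /\
      forall v : nat -> M, (forall j, (j < K)%nat -> dist (v j) (u j) < delta) ->
        Reg u - eps < Reg v.

Definition coercive_in_diam {M : Type} (dist : M -> M -> R) (K : nat)
    (Reg : (nat -> M) -> R) : Prop :=
  forall useq : nat -> (nat -> M),
    cv_infty (fun n => diam dist K (useq n)) ->
    cv_infty (fun n => Reg (useq n)).

From Stdlib Require Import Reals Lra Lia Psatz ClassicalEpsilon.
Open Scope R_scope.

(* Direct method.  The objective is nonnegative, and along a minimizing sequence
   the regularizer stays bounded, so by coercivity the diameters of the u^(n)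
   stay bounded.  The weights a_ij may be negative, but since they sum to one,
   sum_j a_ij dist(w,u_j)^2 grows like dist(w,u_0)^2; hence every weighted mean
   lies within a distance of u_0 controlled by diam(u), while the data term
   bounds dist(v_i,f_i).  So all points of the minimizing sequence, together with
   the chosen means, stay in a bounded set and (Hopf-Rinow) a subsequence
   converges.  A limit of weighted means is a weighted mean of the limit, so the
   mean of the limit closest to f_i is at least as close as the limit of the
   chosen means; with the lower semicontinuity of R the limit is a minimizer. *)

Lemma rpow_ge0 x p : 0 <= rpow x p.
Proof. unfold rpow; destruct (Req_EM_T x 0); [lra|]. left; apply exp_pos. Qed.

Lemma rpow_0 p : rpow 0 p = 0.
Proof. unfold rpow; destruct (Req_EM_T 0 0); [reflexivity | congruence]. Qed.

Lemma rpow_Rpower x p : 0 < x -> rpow x p = Rpower x p.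
Proof. intros; unfold rpow; destruct (Req_EM_T x 0); [lra | reflexivity]. Qed.

Lemma rpow_le x y p : 0 <= p -> 0 <= x <= y -> rpow x p <= rpow y p.
Proof.
  intros Hp Hxy. destruct (Req_EM_T x 0) as [->|Hx].
  - rewrite rpow_0; apply rpow_ge0.
  - rewrite !rpow_Rpower by lra. apply Rle_Rpower_l; lra.
Qed.

Lemma rpow_le_self x p : 1 <= p -> 0 <= x <= 1 -> rpow x p <= x.
Proof.
  intros Hp Hx. destruct (Req_EM_T x 0) as [->|Hx0]; [rewrite rpow_0; lra|].
  rewrite rpow_Rpower by lra. replace p with (1 + (p - 1)) by ring.
  rewrite Rpower_plus, Rpower_1 by lra.
  assert (Hle1 : Rpower x (p - 1) <= Rpower 1 (p - 1)) by (apply Rle_Rpower_l; lra).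
  unfold Rpower at 2 in Hle1. rewrite ln_1, Rmult_0_r, exp_0 in Hle1. nra.
Qed.

Lemma le_Rmax_of_rpow_le x p c : 1 <= p -> 0 <= x -> rpow x p <= c -> x <= Rmax 1 c.
Proof.
  intros Hp Hx Hc. pose proof (Rmax_l 1 c). pose proof (Rmax_r 1 c).
  destruct (Rle_dec x 1); [lra|].
  rewrite rpow_Rpower in Hc by lra.
  assert (Hx1 : Rpower x 1 <= Rpower x p) by (apply Rle_Rpower; lra).
  rewrite Rpower_1 in Hx1 by lra. lra.
Qed.

Lemma rpow_cv (x : nat -> R) a p : 1 <= p -> (forall n, 0 <= x n) -> 0 <= a ->
  Un_cv x a -> Un_cv (fun n => rpow (x n) p) (rpow a p).
Proof.
  intros Hp Hx Ha Hcv. destruct (Req_EM_T a 0) as [->|Ha0].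
  - rewrite rpow_0. intros eps Heps.
    destruct (Hcv (Rmin eps 1)) as [n0 Hn0]; [apply Rmin_glb_lt; lra|].
    exists n0; intros n Hn. specialize (Hn0 n Hn). unfold Rdist in *.
    pose proof (Rmin_l eps 1). pose proof (Rmin_r eps 1). pose proof (Hx n).
    rewrite Rminus_0_r, Rabs_pos_eq in * by (auto || apply rpow_ge0).
    pose proof (rpow_le_self (x n) p Hp). lra.
  - assert (Hcont : Un_cv (fun n => Rpower (x n) p) (Rpower a p)).
    { apply (continuity_seq (fun y => Rpower y p)); auto. apply derivable_continuous_pt.
      exists (p * Rpower a (p - 1)). apply derivable_pt_lim_power; lra. }
    rewrite rpow_Rpower by lra. intros eps Heps.
    destruct (Hcont eps Heps) as [n1 Hn1]. destruct (Hcv a) as [n2 Hn2]; [lra|].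
    exists (max n1 n2). intros n Hn. rewrite rpow_Rpower.
    + apply Hn1; lia.
    + specialize (Hn2 n ltac:(lia)). unfold Rdist in Hn2.
      destruct (Rabs_def2 _ _ Hn2); lra.
Qed.

Lemma sumR_le n g h : (forall i, (i < n)%nat -> g i <= h i) -> sumR n g <= sumR n h.
Proof.
  induction n as [|n IH]; simpl; intros H; [lra|].
  assert (sumR n g <= sumR n h) by (apply IH; intros; apply H; lia).
  pose proof (H n ltac:(lia)). lra.
Qed.

Lemma sumR_ge0 n g : (forall i, (i < n)%nat -> 0 <= g i) -> 0 <= sumR n g.
Proof.
  induction n as [|n IH]; simpl; intros H; [lra|].
  assert (0 <= sumR n g) by (apply IH; intros; apply H; lia).
  pose proof (H n ltac:(lia)). lra.
Qed.

Lemma term_le_sumR n g i : (forall k, (k < n)%nat -> 0 <= g k) -> (i < n)%nat -> g i <= sumR n g.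
Proof.
  induction n as [|n IH]; simpl; intros H Hi; [lia|].
  assert (0 <= sumR n g) by (apply sumR_ge0; intros; apply H; lia).
  destruct (Nat.eq_dec i n) as [->|]; [lra|].
  assert (g i <= sumR n g) by (apply IH; [intros; apply H; lia | lia]).
  pose proof (H n ltac:(lia)). lra.
Qed.

Lemma sumR_mulr n g c : sumR n (fun i => g i * c) = sumR n g * c.
Proof. induction n as [|n IH]; simpl; [ring|]. rewrite IH; ring. Qed.

Lemma sumR_minus n g h : sumR n (fun i => g i - h i) = sumR n g - sumR n h.
Proof. induction n as [|n IH]; simpl; [ring|]. rewrite IH; ring. Qed.

Lemma le_maxR n g i : (i < n)%nat -> g i <= maxR n g.
Proof.
  induction n as [|n IH]; simpl; intros Hi; [lia|].
  destruct (Nat.eq_dec i n) as [->|]; [apply Rmax_r|].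
  eapply Rle_trans; [apply IH; lia | apply Rmax_l].
Qed.

Lemma Un_cv_const c : Un_cv (fun _ => c) c.
Proof. intros eps Heps. exists O; intros. unfold Rdist. rewrite Rminus_diag, Rabs_R0; lra. Qed.

Lemma Un_cv_sq u l : Un_cv u l -> Un_cv (fun n => u n ^ 2) (l ^ 2).
Proof.
  intros Hu eps Heps. destruct (CV_mult _ _ _ _ Hu Hu eps Heps) as [n0 Hn0].
  exists n0. intros n Hn. simpl. rewrite !Rmult_1_r. exact (Hn0 n Hn).
Qed.

Lemma sumR_cv n (g : nat -> nat -> R) (l : nat -> R) :
  (forall i, (i < n)%nat -> Un_cv (fun k => g k i) (l i)) ->
  Un_cv (fun k => sumR n (g k)) (sumR n l).
Proof.
  induction n as [|n IH]; simpl; intros H; [apply Un_cv_const|].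
  apply CV_plus; [apply IH; intros; apply H | apply H]; lia.
Qed.

Lemma eventually_forall_lt m (P : nat -> nat -> Prop) :
  (forall j, (j < m)%nat -> exists n0, forall n, (n0 <= n)%nat -> P j n) ->
  exists n0, forall n, (n0 <= n)%nat -> forall j, (j < m)%nat -> P j n.
Proof.
  induction m as [|m IH]; intros H; [exists O; intros; lia|].
  destruct IH as [n1 H1]; [intros; apply H; lia|].
  destruct (H m ltac:(lia)) as [n2 H2]. exists (max n1 n2). intros n Hn j Hj.
  destruct (Nat.eq_dec j m) as [->|]; [apply H2 | apply H1]; lia.
Qed.

Definition extraction (phi : nat -> nat) : Prop := forall n, (phi n < phi (S n))%nat.

Lemma extraction_lt phi : extraction phi -> forall a b, (a < b)%nat -> (phi a < phi b)%nat.
Proof. intros H a b Hab. induction Hab; [apply H|]. specialize (H m). lia. Qed.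

Lemma extraction_ge phi : extraction phi -> forall n, (n <= phi n)%nat.
Proof. intros H n; induction n; [lia|]. specialize (H n); lia. Qed.

Lemma extraction_comp phi psi :
  extraction phi -> extraction psi -> extraction (fun n => phi (psi n)).
Proof. intros Hphi Hpsi n. apply extraction_lt; auto. Qed.

Lemma Un_cv_extraction phi u l : extraction phi -> Un_cv u l -> Un_cv (fun n => u (phi n)) l.
Proof.
  intros Hphi Hcv eps Heps. destruct (Hcv eps Heps) as [n0 Hn0].
  exists n0; intros n Hn. apply Hn0. pose proof (extraction_ge phi Hphi n). lia.
Qed.

Definition le_limsup (a : R) (s : nat -> R) : Prop :=
  forall eps, 0 < eps -> forall n0, exists n, (n0 <= n)%nat /\ a < s n + eps.

Lemma le_limsup_of_eventually a s :
  (forall eps, 0 < eps -> exists n0, forall n, (n0 <= n)%nat -> a < s n + eps) ->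
  le_limsup a s.
Proof.
  intros H eps Heps n0. destruct (H eps Heps) as [n1 Hn1].
  exists (max n0 n1). split; [lia | apply Hn1; lia].
Qed.

Lemma le_limsup_of_cv a s : Un_cv s a -> le_limsup a s.
Proof.
  intros Hcv. apply le_limsup_of_eventually. intros eps Heps.
  destruct (Hcv eps Heps) as [n0 Hn0]. exists n0; intros n Hn.
  specialize (Hn0 n Hn). unfold Rdist in Hn0. destruct (Rabs_def2 _ _ Hn0). lra.
Qed.

Lemma le_limsup_extraction phi a s t :
  extraction phi -> (forall n, t n = s (phi n)) -> le_limsup a t -> le_limsup a s.
Proof.
  intros Hphi Hts H eps Heps n0. destruct (H eps Heps n0) as [n [Hn Ha]].
  exists (phi n). rewrite <- Hts. split; [|exact Ha].
  pose proof (extraction_ge phi Hphi n). lia.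
Qed.

Lemma ex_minimizing_seq {X : Type} (P : X -> Prop) (g : X -> R) (b : R) :
  (exists x, P x) -> (forall x, P x -> b <= g x) ->
  exists (m : R) (xs : nat -> X), (forall x, P x -> m <= g x) /\
    forall n, P (xs n) /\ g (xs n) < m + / (INR n + 1).
Proof.
  intros [x0 Hx0] Hb.
  destruct (completeness (fun r => exists x, P x /\ r = - g x)) as [m [Hub Hlub]].
  - exists (- b). intros r [x [Px ->]]. specialize (Hb x Px). red; lra.
  - exists (- g x0); eauto.
  - assert (Hseq : forall n : nat, exists x, P x /\ g x < - m + / (INR n + 1)).
    { intros n. apply NNPP; intros Hn.
      assert (Hpos : 0 < / (INR n + 1)) by (apply Rinv_0_lt_compat; pose proof (pos_INR n); lra).
      enough (m <= m - / (INR n + 1)) by lra.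
      apply Hlub. intros r [x [Px ->]].
      apply Rnot_lt_le; intros Hlt. apply Hn. exists x; split; [exact Px | lra]. }
    exists (- m), (fun n => proj1_sig (constructive_indefinite_description _ (Hseq n))).
    split.
    + intros x Px. enough (- g x <= m) by lra. apply Hub; eauto.
    + intros n. exact (proj2_sig (constructive_indefinite_description _ (Hseq n))).
Qed.

Lemma direct_method {X : Type} (P : X -> Prop) (g : X -> R) (b : R) :
  (exists x, P x) -> (forall x, P x -> b <= g x) ->
  (forall (xs : nat -> X) (c : R), (forall n, P (xs n)) -> (forall n, g (xs n) <= c) ->
     exists y, P y /\ le_limsup (g y) (fun n => g (xs n))) ->
  exists y, P y /\ forall x, P x -> g y <= g x.
Proof.
  intros Hne Hb Hcluster.
  destruct (ex_minimizing_seq P g b Hne Hb) as [m [xs [Hm Hxs]]].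
  assert (Hinv_le1 : forall n, / (INR n + 1) <= 1).
  { intros n. rewrite <- Rinv_1. apply Rinv_le_contravar; [lra|]. pose proof (pos_INR n); lra. }
  destruct (Hcluster xs (m + 1)) as [y [Py Hy]].
  - intros n; apply Hxs.
  - intros n. destruct (Hxs n) as [_ H]. specialize (Hinv_le1 n). lra.
  - exists y; split; [exact Py|]. intros x Px. specialize (Hm x Px).
    enough (g y <= m) by lra. apply Rnot_lt_le; intros Hlt.
    set (eps := (g y - m) / 2).
    destruct (archimed_cor1 eps) as [n0 [Hn0 Hn0pos]]; [unfold eps; lra|].
    destruct (Hy eps ltac:(unfold eps; lra) n0) as [n [Hn Hgy]].
    destruct (Hxs n) as [_ Hxn].
    assert (/ (INR n + 1) < / INR n0).
    { apply le_INR in Hn. apply lt_0_INR in Hn0pos. apply Rinv_lt_contravar; nra. }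
    unfold eps in *; lra.
Qed.

Section Metric.
Variables (M : Type) (dist : M -> M -> R).
Hypothesis HM : complete_connected_riemannian_distance dist.

Lemma dist_ge0 x y : 0 <= dist x y. Proof. apply HM. Qed.
Lemma dist_sym x y : dist x y = dist y x. Proof. apply HM. Qed.
Lemma dist_triangle x y z : dist x z <= dist x y + dist y z. Proof. apply HM. Qed.
Lemma dist_refl x : dist x x = 0. Proof. apply HM; reflexivity. Qed.

Definition cv_in (x : nat -> M) (y : M) : Prop := Un_cv (fun n => dist (x n) y) 0.

Lemma cv_in_const y : cv_in (fun _ => y) y.
Proof. unfold cv_in. rewrite dist_refl. apply Un_cv_const. Qed.

Lemma cv_in_extraction phi x y : extraction phi -> cv_in x y -> cv_in (fun n => x (phi n)) y.
Proof. apply Un_cv_extraction. Qed.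

Lemma dist_cv a b a0 b0 : cv_in a a0 -> cv_in b b0 ->
  Un_cv (fun n => dist (a n) (b n)) (dist a0 b0).
Proof.
  intros Ha Hb eps Heps.
  destruct (Ha (eps / 2)) as [n1 H1]; [lra|]. destruct (Hb (eps / 2)) as [n2 H2]; [lra|].
  exists (max n1 n2); intros n Hn. specialize (H1 n ltac:(lia)). specialize (H2 n ltac:(lia)).
  unfold Rdist in *. rewrite Rminus_0_r, Rabs_pos_eq in H1, H2 by apply dist_ge0.
  pose proof (dist_triangle (a n) a0 (b n)). pose proof (dist_triangle a0 b0 (b n)).
  pose proof (dist_triangle a0 (a n) b0). pose proof (dist_triangle (a n) (b n) b0).
  rewrite (dist_sym a0 (a n)), (dist_sym b0 (b n)) in *.
  apply Rabs_def1; lra.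
Qed.

Lemma bounded_ex_cv (x : nat -> M) (o : M) (c : R) : (forall n, dist (x n) o <= c) ->
  exists (phi : nat -> nat) (y : M), extraction phi /\ cv_in (fun n => x (phi n)) y.
Proof. apply HM. Qed.

Lemma bounded_ex_cv_extraction (x : nat -> nat -> M) (o : M) (c : R) m :
  (forall j n, (j < m)%nat -> dist (x n j) o <= c) ->
  exists (phi : nat -> nat) (y : nat -> M), extraction phi /\
    forall j, (j < m)%nat -> cv_in (fun n => x (phi n) j) (y j).
Proof.
  induction m as [|m IH]; intros Hx.
  - exists (fun n => n), (fun _ => o). split; [intros n; lia | intros; lia].
  - destruct IH as [phi [y [Hphi Hy]]]; [intros; apply Hx; lia|].
    destruct (bounded_ex_cv (fun n => x (phi n) m) o c)
      as [psi [z [Hpsi Hz]]]; [intros; apply Hx; lia|].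
    exists (fun n => phi (psi n)), (fun j => if Nat.eq_dec j m then z else y j).
    split; [apply extraction_comp; auto|].
    intros j Hj. destruct (Nat.eq_dec j m) as [->|]; [exact Hz|].
    exact (cv_in_extraction psi _ _ Hpsi (Hy j ltac:(lia))).
Qed.

Section Means.
Variables (K : nat) (A : nat -> nat -> R).

Definition mean_cost i (u : nat -> M) w := sumR K (fun j => A i j * dist w (u j) ^ 2).

Definition weight_norm i := sumR K (fun j => Rabs (A i j)).

Lemma weight_norm_ge0 i : 0 <= weight_norm i.
Proof. apply sumR_ge0; intros; apply Rabs_pos. Qed.

Lemma mul_sq_lower a d d0 D : 0 <= d -> 0 <= d0 -> 0 <= D -> d <= d0 + D -> d0 <= d + D ->
  a * d0 ^ 2 - Rabs a * (2 * D * d0 + D ^ 2) <= a * d ^ 2.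
Proof.
  intros. destruct (Rle_dec 0 a).
  - rewrite Rabs_pos_eq by lra.
    assert (d0 ^ 2 - 2 * D * d0 - D ^ 2 <= d ^ 2) by (destruct (Rle_dec D d0); nra).
    nra.
  - rewrite Rabs_left by lra. assert (d ^ 2 <= d0 ^ 2 + 2 * D * d0 + D ^ 2) by nra. nra.
Qed.

Lemma le_of_sq_le_affine d b c : 0 <= d -> 0 <= b -> 0 <= c -> d ^ 2 <= b * d + c ->
  d <= 1 + b + c.
Proof. intros. destruct (Rle_dec d 1); [lra | nra]. Qed.

Section Anchor.
Variables (i : nat) (u : nat -> M) (D : R).
Hypotheses (HD : 0 <= D) (Hu : forall j, (j < K)%nat -> dist (u 0%nat) (u j) <= D).

Lemma mean_cost_lower w :
  sumR K (A i) * dist w (u 0%nat) ^ 2 - weight_norm i * (2 * D * dist w (u 0%nat) + D ^ 2)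
  <= mean_cost i u w.
Proof.
  unfold mean_cost, weight_norm. rewrite <- sumR_mulr, <- sumR_mulr, <- sumR_minus.
  apply sumR_le. intros j Hj. specialize (Hu j Hj).
  apply mul_sq_lower; auto using dist_ge0.
  - pose proof (dist_triangle w (u 0%nat) (u j)). lra.
  - pose proof (dist_triangle w (u j) (u 0%nat)). rewrite dist_sym in Hu. lra.
Qed.

Lemma mean_cost_anchor : mean_cost i u (u 0%nat) <= weight_norm i * D ^ 2.
Proof.
  unfold mean_cost, weight_norm. rewrite <- sumR_mulr. apply sumR_le.
  intros j Hj. specialize (Hu j Hj). pose proof (dist_ge0 (u 0%nat) (u j)).
  assert (dist (u 0%nat) (u j) ^ 2 <= D ^ 2) by nra.
  pose proof (Rle_abs (A i j)). pose proof (Rabs_pos (A i j)). nra.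
Qed.

Hypothesis HA : sumR K (A i) = 1.

Lemma mean_cost_sublevel w c : mean_cost i u w <= c ->
  dist w (u 0%nat) <= 1 + 2 * weight_norm i * D + (weight_norm i * D ^ 2 + Rabs c).
Proof.
  intros Hc. pose proof (mean_cost_lower w) as Hlow. rewrite HA in Hlow.
  pose proof (weight_norm_ge0 i). pose proof (Rle_abs c). pose proof (Rabs_pos c).
  apply le_of_sq_le_affine; auto using dist_ge0; nra.
Qed.

Lemma is_mean_near_anchor v : is_mean dist K A i u v ->
  dist v (u 0%nat) <= 1 + 2 * weight_norm i * D + 2 * weight_norm i * D ^ 2.
Proof.
  intros Hv. pose proof (weight_norm_ge0 i).
  pose proof (mean_cost_sublevel v _ (Rle_trans _ _ _ (Hv (u 0%nat)) mean_cost_anchor))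
    as Hnear.
  rewrite Rabs_pos_eq in Hnear by nra. lra.
Qed.

End Anchor.

Lemma mean_cost_cv i us ws u w :
  (forall j, (j < K)%nat -> cv_in (fun n => us n j) (u j)) -> cv_in ws w ->
  Un_cv (fun n => mean_cost i (us n) (ws n)) (mean_cost i u w).
Proof.
  intros Hu Hw. apply (sumR_cv K (fun n j => A i j * dist (ws n) (us n j) ^ 2)).
  intros j Hj. apply CV_mult; [apply Un_cv_const|].
  apply Un_cv_sq, dist_cv; auto.
Qed.

Lemma is_mean_closed i us vs u v :
  (forall j, (j < K)%nat -> cv_in (fun n => us n j) (u j)) -> cv_in vs v ->
  (forall n, is_mean dist K A i (us n) (vs n)) -> is_mean dist K A i u v.
Proof.
  intros Hu Hv Hmean w.
  apply (Rle_cv_lim (Un := fun n => mean_cost i (us n) (vs n))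
                    (Vn := fun n => mean_cost i (us n) w)).
  - intros n; apply Hmean.
  - apply mean_cost_cv; auto.
  - apply mean_cost_cv; auto using cv_in_const.
Qed.

Lemma ex_is_mean i u : sumR K (A i) = 1 -> exists v, is_mean dist K A i u v.
Proof.
  intros HA. set (D := sumR K (fun j => dist (u 0%nat) (u j))).
  assert (HD : 0 <= D) by (apply sumR_ge0; intros; apply dist_ge0).
  assert (Hu : forall j, (j < K)%nat -> dist (u 0%nat) (u j) <= D).
  { intros j Hj. apply (term_le_sumR K (fun j => dist (u 0%nat) (u j))); auto using dist_ge0. }
  pose proof (weight_norm_ge0 i) as HS.
  destruct (direct_method (fun _ : M => True) (mean_cost i u)
              (- (weight_norm i * D) ^ 2 - weight_norm i * D ^ 2)) as [v [_ Hv]].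
  - exists (u 0%nat); exact I.
  - intros w _. pose proof (mean_cost_lower i u D HD Hu w) as Hlow. rewrite HA in Hlow.
    pose proof (pow2_ge_0 (dist w (u 0%nat) - weight_norm i * D)). nra.
  - intros ws c _ Hc.
    destruct (bounded_ex_cv_extraction (fun n _ => ws n) (u 0%nat) _ 1
                (fun _ n _ => mean_cost_sublevel i u D HD Hu HA (ws n) c (Hc n)))
      as [phi [y [Hphi Hy]]].
    exists (y O); split; [exact I|].
    apply (le_limsup_extraction phi _ _ (fun n => mean_cost i u (ws (phi n)))); auto.
    apply le_limsup_of_cv, mean_cost_cv; auto using cv_in_const.
  - exists v. intros w. apply Hv; exact I.
Qed.

Lemma ex_in_calA f u i : sumR K (A i) = 1 -> exists v, in_calA dist K A f u i v.
Proof.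
  intros HA.
  destruct (direct_method (is_mean dist K A i u) (fun v => dist v (f i)) 0) as [v [Hv Hmin]].
  - apply ex_is_mean; exact HA.
  - intros; apply dist_ge0.
  - intros vs c Hvs Hc.
    destruct (bounded_ex_cv_extraction (fun n _ => vs n) (f i) c 1 (fun _ n _ => Hc n))
      as [phi [y [Hphi Hy]]].
    exists (y O); split.
    + apply (is_mean_closed i (fun _ => u) (fun n => vs (phi n))); auto using cv_in_const.
    + apply (le_limsup_extraction phi _ _ (fun n => dist (vs (phi n)) (f i))); auto.
      apply le_limsup_of_cv, dist_cv; auto using cv_in_const.
  - exists v; split; auto.
Qed.

Lemma in_calA_choice N f u : (forall i, (i < N)%nat -> sumR K (A i) = 1) ->
  exists v : nat -> M, forall i, (i < N)%nat -> in_calA dist K A f u i (v i).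
Proof.
  intros HA.
  assert (H : forall i, exists v, (i < N)%nat -> in_calA dist K A f u i v).
  { intros i. destruct (Nat.lt_ge_cases i N) as [Hi|Hi].
    - destruct (ex_in_calA f u i (HA i Hi)) as [v Hv]. exists v; auto.
    - exists (u 0%nat). intros; lia. }
  exists (fun i => proj1_sig (constructive_indefinite_description _ (H i))).
  intros i. exact (proj2_sig (constructive_indefinite_description _ (H i))).
Qed.

End Means.

Lemma dist_le_diam K u j k : (j < K)%nat -> (k < K)%nat -> dist (u j) (u k) <= diam dist K u.
Proof.
  intros Hj Hk. unfold diam. eapply Rle_trans; [|apply (le_maxR K _ j Hj)].
  apply (le_maxR K (fun k => dist (u j) (u k))), Hk.
Qed.

Lemma lsc_on_MK_cv K Reg us u : lsc_on_MK dist K Reg ->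
  (forall j, (j < K)%nat -> cv_in (fun n => us n j) (u j)) ->
  forall eps, 0 < eps -> exists n0, forall n, (n0 <= n)%nat -> Reg u - eps < Reg (us n).
Proof.
  intros Hlsc Hu eps Heps. destruct (Hlsc u eps Heps) as [delta [Hdelta Hnear]].
  destruct (eventually_forall_lt K (fun j n => dist (us n j) (u j) < delta)) as [n0 Hn0].
  - intros j Hj. destruct (Hu j Hj delta Hdelta) as [n0 Hn0]. exists n0. intros n Hn.
    specialize (Hn0 n Hn). unfold Rdist in Hn0.
    rewrite Rminus_0_r, Rabs_pos_eq in Hn0 by apply dist_ge0. exact Hn0.
  - exists n0. intros n Hn. apply Hnear. intros j Hj. apply Hn0; auto.
Qed.

Section Problem.
Variables (N K : nat) (A : nat -> nat -> R) (f : nat -> M) (p lam : R)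
  (Reg : (nat -> M) -> R).
Hypotheses (HN : (0 < N)%nat) (HA : forall i, (i < N)%nat -> sumR K (fun j => A i j) = 1)
  (Hp : 1 <= p) (Hlam : 0 < lam) (HReg0 : forall u, 0 <= Reg u)
  (HRlsc : lsc_on_MK dist K Reg) (HRcoer : coercive_in_diam dist K Reg).

Definition data_term (v : nat -> M) : R := sumR N (fun i => rpow (dist (v i) (f i)) p).

Lemma data_term_ge0 v : 0 <= data_term v.
Proof. apply sumR_ge0; intros; apply rpow_ge0. Qed.

Lemma data_term_cv vs v : (forall i, (i < N)%nat -> cv_in (fun n => vs n i) (v i)) ->
  Un_cv (fun n => data_term (vs n)) (data_term v).
Proof.
  intros Hv. apply (sumR_cv N (fun n i => rpow (dist (vs n i) (f i)) p)).
  intros i Hi. apply rpow_cv; auto using dist_ge0. apply dist_cv; auto using cv_in_const.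
Qed.

Lemma data_term_sublevel v c i : data_term v <= c -> (i < N)%nat ->
  dist (v i) (f i) <= Rmax 1 c.
Proof.
  intros Hc Hi. apply (le_Rmax_of_rpow_le _ p); auto using dist_ge0.
  eapply Rle_trans; [|exact Hc].
  exact (term_le_sumR N (fun i => rpow (dist (v i) (f i)) p) i (fun k _ => rpow_ge0 _ _) Hi).
Qed.

Lemma objective_value_ge0 u E : objective_value dist N K A f p lam Reg u E -> 0 <= E.
Proof.
  intros [v [_ ->]]. pose proof (data_term_ge0 v). pose proof (HReg0 u).
  unfold data_term in *. nra.
Qed.

Lemma ex_objective_value u : exists E, objective_value dist N K A f p lam Reg u E.
Proof.
  destruct (in_calA_choice K A N f u HA) as [v Hv].
  exists (data_term v + lam * Reg u), v. split; [exact Hv | reflexivity].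
Qed.

Lemma Reg_sublevel_diam_bounded c :
  exists D, 0 <= D /\ forall u, Reg u <= c -> diam dist K u <= D.
Proof.
  apply NNPP; intros Hunb.
  assert (Hk : forall k : nat, exists u, Reg u <= c /\ INR k < diam dist K u).
  { intros k. apply NNPP; intros Hk. apply Hunb. exists (Rmax 0 (INR k)).
    split; [apply Rmax_l|]. intros u Hu. apply Rnot_lt_le; intros Hlt. apply Hk.
    exists u. split; [exact Hu|]. eapply Rle_lt_trans; [apply Rmax_r | exact Hlt]. }
  set (us := fun k => proj1_sig (constructive_indefinite_description _ (Hk k))).
  assert (Hus : forall k, Reg (us k) <= c /\ INR k < diam dist K (us k))
    by (intros k; exact (proj2_sig (constructive_indefinite_description _ (Hk k)))).
  assert (Hcv : cv_infty (fun k => diam dist K (us k))).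
  { intros B. destruct (INR_unbounded B) as [k0 Hk0]. exists k0. intros k Hle.
    apply le_INR in Hle. destruct (Hus k). lra. }
  destruct (HRcoer us Hcv c) as [k0 Hk0].
  specialize (Hk0 k0 (le_n _)). destruct (Hus k0). lra.
Qed.

Lemma objective_sublevel_bounded c : exists B, forall u v,
  (forall i, (i < N)%nat -> in_calA dist K A f u i (v i)) ->
  data_term v + lam * Reg u <= c ->
  (forall j, (j < K)%nat -> dist (u j) (f 0%nat) <= B) /\
  (forall i, (i < N)%nat -> dist (v i) (f 0%nat) <= B).
Proof.
  destruct (Reg_sublevel_diam_bounded (c / lam)) as [D [HD HdiamD]].
  set (S := sumR N (weight_norm K A)).
  set (C := 1 + 2 * S * D + 2 * S * D ^ 2).
  exists (D + 2 * C + Rmax 1 c). intros u v Hv Hc.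
  pose proof (data_term_ge0 v). pose proof (HReg0 u).
  assert (Hu : forall j, (j < K)%nat -> dist (u 0%nat) (u j) <= D).
  { intros j Hj. apply Rle_trans with (diam dist K u); [apply dist_le_diam; lia|].
    apply HdiamD. apply (Rmult_le_reg_l lam); [exact Hlam|].
    replace (lam * (c / lam)) with c by (field; lra). lra. }
  assert (Hfit : forall i, (i < N)%nat -> dist (v i) (f i) <= Rmax 1 c).
  { intros i Hi. apply data_term_sublevel; [nra | exact Hi]. }
  assert (Hmean : forall i, (i < N)%nat -> dist (v i) (u 0%nat) <= C).
  { intros i Hi. destruct (Hv i Hi) as [Hvi _].
    pose proof (is_mean_near_anchor K A i u D HD Hu (HA i Hi) (v i) Hvi).
    assert (weight_norm K A i <= S)
      by (apply (term_le_sumR N (weight_norm K A)); auto using weight_norm_ge0).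
    pose proof (weight_norm_ge0 K A i). unfold C. nra. }
  assert (Hanchor : dist (u 0%nat) (f 0%nat) <= C + Rmax 1 c).
  { pose proof (dist_triangle (u 0%nat) (v 0%nat) (f 0%nat)) as Htri.
    rewrite (dist_sym (u 0%nat) (v 0%nat)) in Htri.
    pose proof (Hfit 0%nat HN). pose proof (Hmean 0%nat HN). lra. }
  assert (0 <= C) by (eapply Rle_trans; [apply dist_ge0 | apply (Hmean 0%nat HN)]).
  pose proof (Rmax_l 1 c).
  split.
  - intros j Hj. pose proof (Hu j Hj).
    pose proof (dist_triangle (u j) (u 0%nat) (f 0%nat)) as Htri.
    rewrite (dist_sym (u j) (u 0%nat)) in Htri. lra.
  - intros i Hi. pose proof (Hmean i Hi).
    pose proof (dist_triangle (v i) (u 0%nat) (f 0%nat)). lra.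
Qed.

Lemma objective_value_lsc us vs u v :
  (forall n i, (i < N)%nat -> in_calA dist K A f (us n) i (vs n i)) ->
  (forall j, (j < K)%nat -> cv_in (fun n => us n j) (u j)) ->
  (forall i, (i < N)%nat -> cv_in (fun n => vs n i) (v i)) ->
  exists E, objective_value dist N K A f p lam Reg u E /\
    le_limsup E (fun n => data_term (vs n) + lam * Reg (us n)).
Proof.
  intros Hcal Hu Hv.
  assert (Hmean : forall i, (i < N)%nat -> is_mean dist K A i u (v i)).
  { intros i Hi. apply (is_mean_closed K A i us (fun n => vs n i)); auto.
    intros n; apply Hcal, Hi. }
  destruct (in_calA_choice K A N f u HA) as [w Hw].
  exists (data_term w + lam * Reg u). split; [exists w; split; [exact Hw | reflexivity]|].
  assert (Hwv : data_term w <= data_term v).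
  { apply sumR_le. intros i Hi. apply rpow_le; [lra|].
    split; [apply dist_ge0 | apply (Hw i Hi), Hmean, Hi]. }
  apply le_limsup_of_eventually. intros eps Heps.
  destruct (data_term_cv vs v Hv (eps / 2)) as [n1 Hn1]; [lra|].
  destruct (lsc_on_MK_cv K Reg us u HRlsc Hu (eps / (2 * lam))) as [n2 Hn2].
  { apply Rdiv_lt_0_compat; lra. }
  exists (max n1 n2). intros n Hn.
  specialize (Hn1 n ltac:(lia)). unfold Rdist in Hn1. destruct (Rabs_def2 _ _ Hn1).
  specialize (Hn2 n ltac:(lia)). apply (Rmult_lt_compat_l lam) in Hn2; [|exact Hlam].
  replace (lam * (Reg u - eps / (2 * lam))) with (lam * Reg u - eps / 2) in Hn2
    by (field; lra).
  lra.
Qed.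

Lemma objective_sublevel_cluster (xs : nat -> (nat -> M) * R) c :
  (forall n, objective_value dist N K A f p lam Reg (fst (xs n)) (snd (xs n))) ->
  (forall n, snd (xs n) <= c) ->
  exists y, objective_value dist N K A f p lam Reg (fst y) (snd y) /\
    le_limsup (snd y) (fun n => snd (xs n)).
Proof.
  intros Hxs Hc.
  set (us := fun n => fst (xs n)).
  set (vs := fun n => proj1_sig (constructive_indefinite_description _ (Hxs n))).
  assert (Hvs : forall n, (forall i, (i < N)%nat -> in_calA dist K A f (us n) i (vs n i)) /\
                          snd (xs n) = data_term (vs n) + lam * Reg (us n))
    by (intros n; exact (proj2_sig (constructive_indefinite_description _ (Hxs n)))).
  destruct (objective_sublevel_bounded c) as [B HB].
  assert (HBn : forall n, (forall j, (j < K)%nat -> dist (us n j) (f 0%nat) <= B) /\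
                          (forall i, (i < N)%nat -> dist (vs n i) (f 0%nat) <= B)).
  { intros n. destruct (Hvs n) as [Hcal Hval]. apply HB; [exact Hcal|].
    rewrite <- Hval. apply Hc. }
  destruct (bounded_ex_cv_extraction us (f 0%nat) B K) as [phi [u [Hphi Hu]]].
  { intros j n Hj. apply HBn, Hj. }
  destruct (bounded_ex_cv_extraction (fun n => vs (phi n)) (f 0%nat) B N)
    as [psi [v [Hpsi Hv]]].
  { intros i n Hi. apply HBn, Hi. }
  destruct (objective_value_lsc (fun n => us (phi (psi n))) (fun n => vs (phi (psi n))) u v)
    as [E [HE Hlim]].
  - intros n. apply (proj1 (Hvs _)).
  - intros j Hj. exact (cv_in_extraction psi _ _ Hpsi (Hu j Hj)).
  - exact Hv.
  - exists (u, E). split; [exact HE|].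
    eapply le_limsup_extraction; [apply (extraction_comp _ _ Hphi Hpsi) | | exact Hlim].
    intros n. symmetry. apply (proj2 (Hvs _)).
Qed.

End Problem.
End Metric.

Theorem theorem3p1 (M : Type) (dist : M -> M -> R)
  (HM : complete_connected_riemannian_distance dist)
  (N K : nat) (HN : (0 < N)%nat)
  (A : nat -> nat -> R)
  (HA : forall i, (i < N)%nat -> sumR K (fun j => A i j) = 1)
  (f : nat -> M) (p lam : R) (Hp : 1 <= p) (Hlam : 0 < lam)
  (Reg : (nat -> M) -> R) (HReg0 : forall u, 0 <= Reg u)
  (HRlsc : lsc_on_MK dist K Reg)
  (HRcoer : coercive_in_diam dist K Reg) :
  exists (ustar : nat -> M) (Estar : R),
    objective_value dist N K A f p lam Reg ustar Estar /\
    forall (u : nat -> M) (E : R),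
      objective_value dist N K A f p lam Reg u E -> Estar <= E.
Proof.
  destruct (direct_method
              (fun ue => objective_value dist N K A f p lam Reg (fst ue) (snd ue)) snd 0)
    as [[u E] [HuE Hmin]].
  - destruct (ex_objective_value M dist HM N K A f p lam Reg HA (fun _ => f 0%nat)) as [E HE].
    exists (fun _ => f 0%nat, E). exact HE.
  - intros [u E]. eapply objective_value_ge0; eauto.
  - intros xs c Hxs Hc. eapply objective_sublevel_cluster; eauto.
  - exists u, E. split; [exact HuE|]. intros u' E' HuE'. exact (Hmin (u', E') HuE').
Qed.
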